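(* Let $0<\varepsilon\le1$ and let $\mathfrak L_0$ be the linear span of $\{e^{-\alpha x^2/(2\sqrt\varepsilon)}:\alpha\in(0,1)\}$. Then $\mathfrak L_0\subset D(S_\varepsilon)$.
   Context: Work in $L^2(\mathbb{R})$. Let $q$ be multiplication by $x$ and $p=-i\,d/dx$ (self-adjoint; $q$ injective). Let $t=q^{-1}p$ with $D(t)=\{f\in D(p):pf\in D(q^{-1})\}$ and $L^2_0$ the subspace of even functions. Define $S_\varepsilon$ in $L^2_0$ by $D(S_\varepsilon)=\{f\in L^2_0\cap\bigcap_{n\ge0}D(t^{2n+1}):\lim_{N\to\infty}\sum_{n=0}^N\frac{(-1)^n}{2n+1}(\sqrt\varepsilon t)^{2n+1}f$ exists in norm$\}$, $S_\varepsilon f=-\varepsilon^{-1/2}\sum_{n\ge0}\frac{(-1)^n}{2n+1}(\sqrt\varepsilon t)^{2n+1}f$. *)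

From mathcomp Require Import all_boot all_order all_algebra.
From mathcomp Require Import all_classical all_reals all_analysis.
From mathcomp Require complex.
Import complex.ComplexField.
Import Order.TTheory GRing.Theory Num.Theory numFieldNormedType.Exports.

Set Implicit Arguments.
Unset Strict Implicit.
Unset Printing Implicit Defensive.

Local Open Scope ring_scope.
Local Open Scope classical_set_scope.

Section Defs.
Variable R : realType.

Notation C := (complex.complex R).

Definition rc (r : R) : C := complex.Complex r 0.
Definition iC : C := complex.Complex 0 1.
Definition sqnorm (z : C) : R := complex.Re z ^+ 2 + complex.Im z ^+ 2.

Definition leb := @lebesgue_measure R.

(* f is (a representative of) an element of L^2(R) (complex valued) *)
Definition L2 (f : R -> C) : Prop :=
  [/\ measurable_fun setT (fun x => complex.Re (f x)),
      measurable_fun setT (fun x => complex.Im (f x)) &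
      (\int[leb]_x (sqnorm (f x))%:E < +oo)%E].

(* equality almost everywhere, i.e. equality in L^2 *)
Definition ae_eq (f g : R -> C) : Prop := {ae leb, forall x, f x = g x}.

Definition L2dist2 (f g : R -> C) : \bar R :=
  (\int[leb]_x (sqnorm (f x - g x))%:E)%E.

Definition test_fun (phi : R -> R) : Prop :=
  (forall (n : nat) (x : R), derivable (derive1n n phi) x 1) /\
  (exists M : R, forall x, M < `|x| -> phi x = 0).

Definition weak_deriv (f g : R -> C) : Prop :=
  forall phi, test_fun phi ->
    (\int[leb]_x (complex.Re (f x) * (derive1 phi) x)%:E
       = - \int[leb]_x (complex.Re (g x) * phi x)%:E)%E /\
    (\int[leb]_x (complex.Im (f x) * (derive1 phi) x)%:E
       = - \int[leb]_x (complex.Im (g x) * phi x)%:E)%E.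

(* graph of p = -i d/dx with its self-adjoint domain H^1(R):
   f in D(p) and p f = h (as elements of L^2) *)
Definition p_rel (f h : R -> C) : Prop :=
  [/\ L2 f, L2 h & weak_deriv f (fun x => iC * h x)].

(* graph of q^{-1}, the inverse of the (injective) multiplication operator q:
   g in D(q^{-1}) = Ran q and q^{-1} g = h, i.e. h in D(q) and q h = g *)
Definition qinv_rel (g h : R -> C) : Prop :=
  [/\ L2 g, L2 h & ae_eq g (fun x => rc x * h x)].

(* graph of t = q^{-1} p, D(t) = {f in D(p) : p f in D(q^{-1})} *)
Definition t_rel (f h : R -> C) : Prop :=
  exists g, p_rel f g /\ qinv_rel g h.

Fixpoint tpow (n : nat) (f h : R -> C) : Prop :=
  match n with
  | 0 => L2 f /\ ae_eq h f
  | n'.+1 => exists k, tpow n' f k /\ t_rel k h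
  end.

Definition L2even (f : R -> C) : Prop :=
  L2 f /\ {ae leb, forall x, f (- x) = f x}.

Definition Scoef (eps : R) (n : nat) : R :=
  (-1) ^+ n / (2 * n + 1)%:R * Num.sqrt eps ^+ (2 * n + 1).

Definition in_dom_S (eps : R) (f : R -> C) : Prop :=
  L2even f /\
  exists H : nat -> R -> C,
    (forall n, tpow (2 * n + 1) f (H n)) /\
    exists F : R -> C, L2 F /\
      ((fun N : nat => L2dist2 (fun x => \sum_(n < N.+1) rc (Scoef eps n) * H n x) F)
         @ \oo --> 0%E).

Definition gauss (eps a : R) (x : R) : C :=
  rc (expR (- (a * x ^+ 2) / (2 * Num.sqrt eps))).

End Defs.

(** Write [g_b x = exp (- b x^2 / 2)], so that the Gaussians of the statement
    are [g_b] with [b = a / sqrt eps]. Since [p g_b = - i g_b' = i b x g_b] and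
    [q^-1 (x g_b) = g_b], every [g_b] is an eigenfunction of [t] with eigenvalue
    [i b], and [t^(2n+1)] acts on a combination [sum_k c_k g_(b_k)] coefficientwise.
    As [(sqrt eps)^(2n+1) (-1)^n (i a / sqrt eps)^(2n+1) = i a^(2n+1)], the N-th
    partial sum of the series defining [S_eps] is
    [sum_k c_k i (sum_(n <= N) a_k^(2n+1) / (2n+1)) g_(b_k)]; for [0 < a_k < 1]
    the scalar series (those of [artanh a_k]) converge, hence so do the partial
    sums in [L^2]. *)

From mathcomp Require Import all_boot all_order all_algebra.
From mathcomp Require Import all_classical all_reals all_analysis.
From mathcomp Require complex.
From mathcomp Require Import measurable_realfun ring lra.
Import complex.ComplexField.
Import Order.TTheory GRing.Theory Num.Theory numFieldNormedType.Exports.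
Set Implicit Arguments.
Unset Strict Implicit.
Unset Printing Implicit Defensive.

Local Open Scope ring_scope.
Local Open Scope classical_set_scope.

Section complex_lemmas.
Variable R : realType.
Notation C := (complex.complex R).

Lemma ReD (z w : C) : complex.Re (z + w) = complex.Re z + complex.Re w.
Proof. by case: z; case: w. Qed.

Lemma ImD (z w : C) : complex.Im (z + w) = complex.Im z + complex.Im w.
Proof. by case: z; case: w. Qed.

Lemma ReM (z w : C) :
  complex.Re (z * w) = complex.Re z * complex.Re w - complex.Im z * complex.Im w.
Proof. by case: z; case: w. Qed.

Lemma ImM (z w : C) :
  complex.Im (z * w) = complex.Re z * complex.Im w + complex.Im z * complex.Re w.
Proof. by case: z; case: w. Qed.

Lemma Re_mul_rc (w : C) (r : R) : complex.Re (w * rc r) = complex.Re w * r.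
Proof. by case: w => p q /=; rewrite mulr0 subr0. Qed.

Lemma Im_mul_rc (w : C) (r : R) : complex.Im (w * rc r) = complex.Im w * r.
Proof. by case: w => p q /=; rewrite mulr0 add0r. Qed.

Lemma Re_sum (I : Type) (s : seq I) (F : I -> C) :
  complex.Re (\sum_(i <- s) F i) = \sum_(i <- s) complex.Re (F i).
Proof. exact: (raddf_sum (@complex.Re R : complex.Rcomplex R -> R)). Qed.

Lemma Im_sum (I : Type) (s : seq I) (F : I -> C) :
  complex.Im (\sum_(i <- s) F i) = \sum_(i <- s) complex.Im (F i).
Proof. exact: (raddf_sum (@complex.Im R : complex.Rcomplex R -> R)). Qed.

Lemma sqnorm_ge0 (z : C) : 0 <= sqnorm z.
Proof. by rewrite addr_ge0 ?sqr_ge0. Qed.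

Lemma sqnormM (z w : C) : sqnorm (z * w) = sqnorm z * sqnorm w.
Proof. by case: z => a b; case: w => c d; rewrite /sqnorm /=; ring. Qed.

Lemma sqnormD_le (z w : C) : sqnorm (z + w) <= 2 * sqnorm z + 2 * sqnorm w.
Proof.
case: z => a b; case: w => c d; rewrite /sqnorm /= -subr_ge0.
have -> : 2 * (a ^+ 2 + b ^+ 2) + 2 * (c ^+ 2 + d ^+ 2) - ((a + c) ^+ 2 + (b + d) ^+ 2)
          = (a - c) ^+ 2 + (b - d) ^+ 2 by ring.
by rewrite addr_ge0 ?sqr_ge0.
Qed.

Lemma rcM (x y : R) : rc (x * y) = rc x * rc y.
Proof. exact: (rmorphM (@complex.real_complex_def R (Phant R))). Qed.

Lemma rcB (x y : R) : rc (x - y) = rc x - rc y.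
Proof. exact: (rmorphB (@complex.real_complex_def R (Phant R))). Qed.

Lemma rcN (x : R) : rc (- x) = - rc x.
Proof. exact: (rmorphN (@complex.real_complex_def R (Phant R))). Qed.

Lemma rcX (x : R) (n : nat) : rc (x ^+ n) = rc x ^+ n.
Proof. exact: (rmorphXn (@complex.real_complex_def R (Phant R))). Qed.

Lemma rc_sum (I : Type) (s : seq I) (F : I -> R) :
  rc (\sum_(i <- s) F i) = \sum_(i <- s) rc (F i).
Proof. exact: (rmorph_sum (@complex.real_complex_def R (Phant R))). Qed.

Lemma sqr_iC : iC R ^+ 2 = -1.
Proof. exact: complex.sqr_i. Qed.

Lemma sqnorm_iC : sqnorm (iC R) = 1.
Proof. by rewrite /sqnorm /= expr0n expr1n add0r. Qed.

Lemma sqnorm_rc (r : R) : sqnorm (rc r) = r ^+ 2.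
Proof. by rewrite /sqnorm /= expr0n addr0. Qed.

End complex_lemmas.

Section L2_space.
Variable R : realType.
Notation C := (complex.complex R).
Notation mu := (@leb R).

Definition cmeasurable (f : R -> C) :=
  measurable_fun setT (fun x => complex.Re (f x)) /\
  measurable_fun setT (fun x => complex.Im (f x)).

Definition L2norm2 (f : R -> C) : \bar R := (\int[mu]_x (sqnorm (f x))%:E)%E.

Lemma L2_cmeasurable f : L2 f -> cmeasurable f.
Proof. by case. Qed.

Lemma L2_lt_pinfty f : L2 f -> (L2norm2 f < +oo)%E.
Proof. by case. Qed.

Lemma cmeasurableD f g : cmeasurable f -> cmeasurable g ->
  cmeasurable (fun x => f x + g x).
Proof.
move=> [mfr mfi] [mgr mgi]; split.
- by under eq_fun do rewrite ReD; exact: measurable_funD.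
- by under eq_fun do rewrite ImD; exact: measurable_funD.
Qed.

Lemma cmeasurableZ c f : cmeasurable f -> cmeasurable (fun x => c * f x).
Proof.
move=> [mfr mfi]; split.
- by under eq_fun do rewrite ReM; apply: measurable_funB; exact: measurable_funM.
- by under eq_fun do rewrite ImM; apply: measurable_funD; exact: measurable_funM.
Qed.

Lemma measurable_sqnorm f : cmeasurable f -> measurable_fun setT (fun x => sqnorm (f x)).
Proof. by move=> [mr mi]; apply: measurable_funD; exact: measurable_funX. Qed.

Lemma L2norm2_ge0 f : (0 <= L2norm2 f)%E.
Proof. by apply: integral_ge0 => x _; rewrite lee_fin sqnorm_ge0. Qed.

Lemma L2norm2Z c f : cmeasurable f ->
  L2norm2 (fun x => c * f x) = ((sqnorm c)%:E * L2norm2 f)%E.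
Proof.
move=> mf; rewrite /L2norm2; under eq_integral do rewrite sqnormM EFinM.
rewrite ge0_integralZl_EFin ?sqnorm_ge0 //.
- by move=> x _; rewrite lee_fin sqnorm_ge0.
- by apply/measurable_EFinP; exact: measurable_sqnorm.
Qed.

Lemma L2norm2D_le f g : cmeasurable f -> cmeasurable g ->
  (L2norm2 (fun x => (f x + g x)%R) <= 2%:E * L2norm2 f + 2%:E * L2norm2 g)%E.
Proof.
move=> mf mg; have msf := measurable_sqnorm mf; have msg := measurable_sqnorm mg.
have sq0 h x : (0 <= (sqnorm (h x))%:E)%E by rewrite lee_fin sqnorm_ge0.
apply: (@le_trans _ _ (\int[mu]_x (2%:E * (sqnorm (f x))%:E + 2%:E * (sqnorm (g x))%:E))%E).
  apply: ge0_le_integral => //.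
  - by apply/measurable_EFinP; apply: measurable_sqnorm; exact: cmeasurableD.
  - by apply: emeasurable_funD; apply/measurable_EFinP; exact: measurable_funM.
  - by move=> x _; rewrite -!EFinM -EFinD lee_fin sqnormD_le.
rewrite ge0_integralD //.
- by rewrite !ge0_integralZl_EFin //; apply/measurable_EFinP.
- by move=> x _; exact: mule_ge0.
- by apply/measurable_EFinP; exact: measurable_funM.
- by move=> x _; exact: mule_ge0.
- by apply/measurable_EFinP; exact: measurable_funM.
Qed.

Lemma L2Z (c : C) (f : R -> C) : L2 f -> L2 (fun x => c * f x).
Proof.
move=> f2; have mf := L2_cmeasurable f2.
have [mr mi] : cmeasurable (fun x => c * f x) by exact: cmeasurableZ.
split => //; rewrite -/(L2norm2 _) L2norm2Z //.
by rewrite lte_mul_pinfty ?lee_fin ?sqnorm_ge0 ?L2_lt_pinfty.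
Qed.

Lemma L2D (f g : R -> C) : L2 f -> L2 g -> L2 (fun x => f x + g x).
Proof.
move=> f2 g2; have mf := L2_cmeasurable f2; have mg := L2_cmeasurable g2.
have [mr mi] := cmeasurableD mf mg; split => //.
apply: le_lt_trans (L2norm2D_le mf mg) _.
by rewrite lte_add_pinfty // lte_mul_pinfty // L2_lt_pinfty.
Qed.

Lemma L2_sum (I : Type) (s : seq I) (F : I -> R -> C) :
  (forall i, L2 (F i)) -> L2 (fun x => \sum_(i <- s) F i x).
Proof.
move=> F2; elim: s => [|i s IH].
  under eq_fun do rewrite big_nil.
  by split; rewrite ?sqnorm_rc ?expr0n /= ?integral0 ?ltry //; exact: measurable_cst.
by under eq_fun do rewrite big_cons; exact: L2D.
Qed.

Lemma L2norm2_sum_cvg0 (I : Type) (s : seq I) (w : I -> nat -> C) (F : I -> R -> C) :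
  (forall i, L2 (F i)) -> (forall i, (fun n => sqnorm (w i n)) @ \oo --> 0) ->
  (fun n => L2norm2 (fun x => \sum_(i <- s) w i n * F i x)) @ \oo --> 0%E.
Proof.
move=> F2 w0; elim: s => [|i s IH].
  under eq_fun do under eq_fun do rewrite big_nil.
  by rewrite /L2norm2 sqnorm_rc expr0n /= integral0; exact: cvg_cst.
have mF j : cmeasurable (F j) by exact: L2_cmeasurable.
have mS n : cmeasurable (fun x => \sum_(j <- s) w j n * F j x).
  by apply/L2_cmeasurable/L2_sum => j; exact: L2Z.
apply: (@squeeze_cvge _ _ _ _ (fun=> 0%E) _ (fun n =>
    2%:E * L2norm2 (fun x => w i n * F i x)%R +
    2%:E * L2norm2 (fun x => \sum_(j <- s) w j n * F j x)%R)%E).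
- apply: nearW => n; rewrite L2norm2_ge0 /=.
  under eq_fun do rewrite big_cons.
  by apply: L2norm2D_le => //; exact: cmeasurableZ.
- exact: cvg_cst.
- rewrite -[0%E]adde0 -{1}(mule0 2%:E); apply: cvgeD => //.
    apply: cvgeZl => //; under eq_fun do rewrite L2norm2Z //.
    rewrite -(mul0e (L2norm2 (F i))); apply: cvgeZr.
      by rewrite ge0_fin_numE ?L2norm2_ge0 ?L2_lt_pinfty.
    by apply: cvg_EFin; [exact: nearW | exact: w0].
  by rewrite -(mule0 2%:E); exact: cvgeZl.
Qed.

Lemma L2_rc (r : R -> R) : measurable_fun setT r -> (\int[mu]_x (r x ^+ 2)%:E < +oo)%E ->
  L2 (fun x => rc (r x)).
Proof.
by move=> mr r2; split => //=; under eq_integral do rewrite sqnorm_rc.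
Qed.
End L2_space.

Section gaussian.
Variable R : realType.
Notation mu := (@leb R).

Definition gaussian (b x : R) : R := expR (- (b * x ^+ 2) / 2).

Lemma is_derive_gaussian (b x : R) :
  is_derive x 1 (gaussian b) (- b * (x * gaussian b x)).
Proof.
have hq : is_derive x 1 ((- b / 2) \*: (@id R ^+ 2)) ((- b / 2) *: ((2%:R * x ^+ 1) *: 1)).
  exact: is_deriveZ.
have -> : gaussian b = expR \o ((- b / 2) \*: (@id R ^+ 2)).
  by apply/funext => y; rewrite /gaussian /= !fctE /GRing.scale /=; congr expR; field.
apply: is_derive_eq (is_derive1_comp (is_derive_expR _) hq) _.
by rewrite /= !fctE /GRing.scale /= mulr1 expr1; field.
Qed.

Lemma continuous_gaussian (b : R) : continuous (gaussian b).
Proof.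
move=> x; apply: differentiable_continuous; rewrite -derivable1_diffP.
by have [] := is_derive_gaussian b x.
Qed.

Lemma measurable_gaussian (b : R) : measurable_fun setT (gaussian b).
Proof. by apply: continuous_measurable_fun; exact: continuous_gaussian. Qed.

Lemma gaussianN (b x : R) : gaussian b (- x) = gaussian b x.
Proof. by rewrite /gaussian sqrrN. Qed.

Lemma sqr_gaussian (b x : R) : gaussian b x ^+ 2 = gaussian (2 * b) x.
Proof. by rewrite /gaussian -expRM_natl; congr expR; field. Qed.

Lemma sqr_mul_gaussian_le (b x : R) : 0 < b ->
  x ^+ 2 * gaussian b x <= 4 / b * gaussian (b / 2) x.
Proof.
move=> b0; have bN0 : b != 0 by rewrite gt_eqF.
have hx : x ^+ 2 <= 4 / b * expR (b * x ^+ 2 / 4).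
  (* [1 + y <= exp y] with [y = b x^2 / 4] *)
  apply: le_trans (_ : 4 / b * (1 + b * x ^+ 2 / 4) <= _).
    rewrite mulrDr mulr1 [4 / b * _](_ : _ = x ^+ 2); last by field.
    by rewrite lerDr divr_ge0 // ltW.
  by rewrite ler_wpM2l ?expR_ge1Dx // divr_ge0 // ltW.
rewrite /gaussian; apply: le_trans (ler_wpM2r (expR_ge0 _) hx) _.
rewrite -[_ * expR _ * _]mulrA -expRD.
by rewrite [_ + _](_ : _ = - (b / 2 * x ^+ 2) / 2); last by field.
Qed.

Lemma gaussian_normal_pdf (b : R) : 0 < b ->
  gaussian b = (fun x => (normal_peak (Num.sqrt b)^-1)^-1 * normal_pdf 0 (Num.sqrt b)^-1 x).
Proof.
move=> b0; have s0 : (Num.sqrt b)^-1 != 0 by rewrite invr_eq0 gt_eqF ?sqrtr_gt0.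
apply/funext => x; rewrite normal_pdfE // mulrA mulVf ?gt_eqF ?normal_peak_gt0 // mul1r.
rewrite /gaussian /normal_fun subr0 exprVn sqr_sqrtr ?ltW //; congr expR.
by field; rewrite gt_eqF.
Qed.

Lemma integral_gaussian_lt_pinfty (b : R) : 0 < b -> (\int[mu]_x (gaussian b x)%:E < +oo)%E.
Proof.
move=> b0; rewrite gaussian_normal_pdf //.
under eq_integral do rewrite EFinM.
rewrite ge0_integralZl_EFin //.
- by rewrite integral_normal_pdf mule1 ltry.
- by move=> x _; rewrite lee_fin normal_pdf_ge0.
- by apply/measurable_EFinP; exact: measurable_normal_pdf.
- by rewrite invr_ge0 normal_peak_ge0.
Qed.

Lemma integral_sqr_mul_gaussian_lt_pinfty (b : R) : 0 < b ->
  (\int[mu]_x (x ^+ 2 * gaussian b x)%:E < +oo)%E.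
Proof.
move=> b0.
apply: le_lt_trans (_ : _ <= \int[mu]_x ((4 / b)%:E * (gaussian (b / 2) x)%:E))%E _.
  apply: ge0_le_integral => //.
  - by move=> x _; rewrite lee_fin mulr_ge0 ?sqr_ge0 ?expR_ge0.
  - by apply/measurable_EFinP; apply: measurable_funM => //; exact: measurable_gaussian.
  - by apply/measurable_EFinP; apply: measurable_funM => //; exact: measurable_gaussian.
  - by move=> x _; rewrite -EFinM lee_fin sqr_mul_gaussian_le.
rewrite ge0_integralZl_EFin ?lte_mul_pinfty ?integral_gaussian_lt_pinfty ?divr_gt0 //.
- by rewrite lee_fin divr_ge0 // ltW.
- by move=> x _; rewrite lee_fin expR_ge0.
- by apply/measurable_EFinP; exact: measurable_gaussian.
- by rewrite divr_ge0 // ltW.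
Qed.

Lemma L2_gaussian (b : R) : 0 < b -> L2 (fun x => rc (gaussian b x)).
Proof.
move=> b0; apply: L2_rc; first exact: measurable_gaussian.
under eq_integral do rewrite sqr_gaussian.
by apply: integral_gaussian_lt_pinfty; rewrite mulr_gt0.
Qed.

Lemma L2_mul_gaussian (b : R) : 0 < b -> L2 (fun x => rc (x * gaussian b x)).
Proof.
move=> b0; apply: L2_rc; first by apply: measurable_funM => //; exact: measurable_gaussian.
under eq_integral do rewrite exprMn sqr_gaussian.
by apply: integral_sqr_mul_gaussian_lt_pinfty; rewrite mulr_gt0.
Qed.
End gaussian.

Section test_functions.
Variable R : realType.
Notation mu := (@leb R).

Lemma derivable1_continuous (f : R -> R) (x : R) : derivable f x 1 -> {for x, continuous f}.
Proof. by move=> df; apply: differentiable_continuous; rewrite -derivable1_diffP. Qed.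

Lemma derivable_oo_LRcontinuousT (f : R -> R) (a b : R) :
  (forall x, derivable f x 1) -> derivable_oo_LRcontinuous f a b.
Proof.
move=> df; split.
- by move=> x _; exact: df.
- by apply: cvg_at_right_filter; exact: derivable1_continuous.
- by apply: cvg_at_left_filter; exact: derivable1_continuous.
Qed.

Lemma derive1_eq0_outside (phi : R -> R) (M x : R) :
  (forall y, M < `|y| -> phi y = 0) -> M < `|x| -> derive1 phi x = 0.
Proof.
move=> phi0 Mx; rewrite derive1E (@near_eq_derive _ _ _ phi (cst 0)) ?derive_cst //.
have e0 : 0 < `|x| - M by rewrite subr_gt0.
near=> y; rewrite /cst phi0 //.
have : `|x - y| < `|x| - M by near: y; exact: cvgr_dist_lt.
by move=> xy; have := ler_normD (x - y) y; rewrite subrK; lra.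
Unshelve. all: by end_near.
Qed.

Lemma integralT_supported (g : R -> R) (M : R) : (forall x, M < `|x| -> g x = 0) ->
  (\int[mu]_x (g x)%:E = \int[mu]_(x in `[(- M)%R, M]) (g x)%:E)%E.
Proof.
move=> g0; rewrite [RHS]integral_mkcond; apply: eq_integral => x _.
rewrite patchE; case: ifPn => // /negP; rewrite inE /= in_itv /= -ler_norml.
by move/negP; rewrite -ltNge => /g0 ->.
Qed.

Lemma integration_by_parts_test_fun (u u' phi : R -> R) :
  (forall x, is_derive x (1 : R) u (u' x)) -> continuous u' -> test_fun phi ->
  (\int[mu]_x (u x * derive1 phi x)%:E = - \int[mu]_x (u' x * phi x)%:E)%E.
Proof.
move=> du cu' [dphi [M0 phi0]].
have dphi0 x : derivable phi x 1 := dphi 0%N x.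
have dphi1 x : derivable (derive1 phi) x 1 := dphi 1%N x.
(* Both integrands vanish outside [[-M, M]], and so does the boundary term. *)
pose M := `|M0| + 1.
have M_gt0 : 0 < M by rewrite /M ltr_wpDl.
have M0M : M0 < M by rewrite /M; apply: le_lt_trans (ler_norm M0) _; rewrite ltrDl.
have supp g : (forall x, M0 < `|x| -> g x = 0) -> forall x, M < `|x| -> g x = 0.
  by move=> g0 x Mx; apply: g0; exact: lt_trans Mx.
rewrite (@integralT_supported _ M); last first.
  by apply: supp => x /(derive1_eq0_outside phi0) ->; rewrite mulr0.
rewrite [in RHS](@integralT_supported _ M); last first.
  by apply: supp => x /phi0 ->; rewrite mulr0.
rewrite (integration_by_parts (F := u) (G := phi) (f := u')) //.
- by rewrite !phi0 ?normrN ?gtr0_norm // !mulr0 subr0 sub0e.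
- by rewrite gtrN.
- exact: continuous_subspaceT.
- by apply: derivable_oo_LRcontinuousT => x; have [] := du x.
- by move=> x _; rewrite derive1E; have [_ ->] := du x.
- by apply: continuous_subspaceT => x; exact: derivable1_continuous.
- exact: derivable_oo_LRcontinuousT.
Qed.
End test_functions.

Section weak_derivative.
Variable R : realType.
Notation C := (complex.complex R).

Variables (I : Type) (s : seq I) (u u' : I -> R -> R).
Hypothesis du : forall k x, is_derive x (1 : R) (u k) (u' k x).
Hypothesis cu' : forall k, continuous (u' k).

Lemma is_derive_lincomb (r : I -> R) (x : R) :
  is_derive x (1 : R) (fun y => \sum_(k <- s) r k * u k y) (\sum_(k <- s) r k * u' k x).
Proof.
elim: s => [|k t IH].
  under eq_fun do rewrite big_nil; rewrite big_nil; exact: is_derive_cst.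
under eq_fun do rewrite big_cons; rewrite big_cons.
exact: (is_deriveD (is_deriveZ (r k) (du k x)) IH).
Qed.

Lemma continuous_lincomb (r : I -> R) : continuous (fun x => \sum_(k <- s) r k * u' k x).
Proof.
apply: continuous_big => [|k _ x]; first exact: (@pseudometric_normed_Zmodule.add_continuous R R^o).
by apply: cvgM; [exact: cvg_cst | exact: cu'].
Qed.

Lemma integration_by_parts_lincomb (r : I -> R) (phi : R -> R) : test_fun phi ->
  (\int[@leb R]_x ((\sum_(k <- s) r k * u k x) * derive1 phi x)%:E
   = - \int[@leb R]_x ((\sum_(k <- s) r k * u' k x) * phi x)%:E)%E.
Proof.
apply: integration_by_parts_test_fun => [x|]; first exact: is_derive_lincomb.
exact: continuous_lincomb.
Qed.

Lemma weak_deriv_sum_rc (d : I -> C) :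
  weak_deriv (fun x => \sum_(k <- s) d k * rc (u k x))
             (fun x => \sum_(k <- s) d k * rc (u' k x)).
Proof.
move=> phi tphi; cbv beta.
have partE (v : I -> R -> R) x :
    complex.Re (\sum_(k <- s) d k * rc (v k x)) = \sum_(k <- s) complex.Re (d k) * v k x /\
    complex.Im (\sum_(k <- s) d k * rc (v k x)) = \sum_(k <- s) complex.Im (d k) * v k x.
  by rewrite Re_sum Im_sum; split; apply: eq_bigr => k _; [exact: Re_mul_rc | exact: Im_mul_rc].
split.
- under eq_integral do rewrite (partE u _).1.
  under [X in (_ = - X)%E]eq_integral do rewrite (partE u' _).1.
  exact: integration_by_parts_lincomb.
- under eq_integral do rewrite (partE u _).2.
  under [X in (_ = - X)%E]eq_integral do rewrite (partE u' _).2.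
  exact: integration_by_parts_lincomb.
Qed.

End weak_derivative.

Section gaussian_eigenfunctions.
Variable R : realType.
Notation C := (complex.complex R).
Variables (I : finType) (b : I -> R).
Hypothesis b_gt0 : forall k, 0 < b k.

Definition gaussian_comb (d : I -> C) (x : R) : C := \sum_k d k * rc (gaussian (b k) x).

Definition t_eigenvalue (k : I) : C := iC R * rc (b k).

Lemma L2_gaussian_comb d : L2 (gaussian_comb d).
Proof. by apply: L2_sum => k; apply: L2Z; exact: L2_gaussian. Qed.

Lemma L2_mul_gaussian_comb (d : I -> C) :
  L2 (fun x => \sum_k d k * rc (x * gaussian (b k) x)).
Proof. by apply: L2_sum => k; apply: L2Z; exact: L2_mul_gaussian. Qed.

Lemma L2even_gaussian_comb d : L2even (gaussian_comb d).
Proof.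
split; first exact: L2_gaussian_comb.
by apply: aeW => x; apply: eq_bigr => k _; rewrite gaussianN.
Qed.

Lemma p_rel_gaussian_comb d :
  p_rel (gaussian_comb d) (fun x => \sum_k (d k * t_eigenvalue k) * rc (x * gaussian (b k) x)).
Proof.
split; [exact: L2_gaussian_comb | exact: L2_mul_gaussian_comb |].
have cu' k : continuous (fun x : R => - b k * (x * gaussian (b k) x)).
  move=> x; apply: cvgM; first exact: cvg_cst.
  by apply: cvgM; [exact: cvg_id | exact: continuous_gaussian].
have := weak_deriv_sum_rc (index_enum I) (fun k x => is_derive_gaussian (b k) x) cu' d.
congr weak_deriv; apply/funext => x; rewrite mulr_sumr; apply: eq_bigr => k _.
by rewrite (rcM (- b k)) rcN -mulN1r -sqr_iC /t_eigenvalue; ring.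
Qed.

Lemma qinv_rel_gaussian_comb d :
  qinv_rel (fun x => \sum_k d k * rc (x * gaussian (b k) x)) (gaussian_comb d).
Proof.
split; [exact: L2_mul_gaussian_comb | exact: L2_gaussian_comb |].
by apply: aeW => x; rewrite mulr_sumr; apply: eq_bigr => k _; rewrite rcM mulrCA.
Qed.

Lemma t_rel_gaussian_comb d :
  t_rel (gaussian_comb d) (gaussian_comb (fun k => d k * t_eigenvalue k)).
Proof.
by eexists; split; [exact: p_rel_gaussian_comb | exact: qinv_rel_gaussian_comb].
Qed.

Lemma tpow_gaussian_comb n d :
  tpow n (gaussian_comb d) (gaussian_comb (fun k => d k * t_eigenvalue k ^+ n)).
Proof.
elim: n => [|n IH] /=.
  split; first exact: L2_gaussian_comb.
  by apply: aeW => x; apply: eq_bigr => k _; rewrite expr0 mulr1.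
exists (gaussian_comb (fun k => d k * t_eigenvalue k ^+ n)); split => //.
have := t_rel_gaussian_comb (fun k => d k * t_eigenvalue k ^+ n); congr t_rel.
by apply/funext => x; apply: eq_bigr => k _; rewrite exprSr mulrA.
Qed.
End gaussian_eigenfunctions.

Section artanh_series.
Variable R : realType.

Definition artanh_term (a : R) (n : nat) : R := a ^+ (2 * n + 1) / (2 * n + 1)%:R.

Lemma is_cvg_artanh_series (a : R) : 0 <= a < 1 -> cvgn (series (artanh_term a)).
Proof.
case/andP=> a0 a1; apply: (@series_le_cvg _ _ (geometric 1 a)).
- by move=> n; rewrite divr_ge0 ?exprn_ge0.
- by move=> n; rewrite /= mul1r exprn_ge0.
- move=> n; rewrite /= mul1r; apply: le_trans (_ : a ^+ (2 * n + 1) <= _).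
    by rewrite ler_pdivrMr ?ltr0n ?addn1 // ler_peMr ?exprn_ge0 // ler1n.
  by apply: (ler_wiXn2l a0 (ltW a1)); rewrite mul2n -addnn -addnA leq_addr.
- by apply: is_cvg_geometric_series; rewrite ger0_norm.
Qed.

Lemma Scoef_mul_eigenvalue (eps a : R) (n : nat) : 0 < eps ->
  rc (Scoef eps n) * (iC R * rc (a / Num.sqrt eps)) ^+ (2 * n + 1) =
  iC R * rc (artanh_term a n).
Proof.
move=> eps0; have se0 : Num.sqrt eps != 0 by rewrite gt_eqF ?sqrtr_gt0.
have iCX : iC R ^+ (2 * n + 1) = iC R * rc ((-1) ^+ n).
  by rewrite exprD exprM sqr_iC expr1 mulrC rcX rcN.
rewrite exprMn iCX -rcX.
transitivity (iC R * rc (Scoef eps n * (-1) ^+ n * (a / Num.sqrt eps) ^+ (2 * n + 1))).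
  by rewrite !rcM; ring.
congr (_ * rc _); rewrite /Scoef /artanh_term; set j := (2 * n + 1)%N.
have sign2 : (-1) ^+ n * (-1) ^+ n = 1 :> R by rewrite -exprMn mulrNN mulr1 expr1n.
have scale : Num.sqrt eps ^+ j * (a / Num.sqrt eps) ^+ j = a ^+ j.
  by rewrite -exprMn mulrCA divff // mulr1.
rewrite [LHS](_ : _ = (-1) ^+ n * (-1) ^+ n * (Num.sqrt eps ^+ j * (a / Num.sqrt eps) ^+ j)
  / j%:R); last by ring.
by rewrite sign2 scale mul1r.
Qed.
End artanh_series.

Section S_on_gaussian_combinations.
Variables (R : realType) (eps : R) (I : finType) (a : I -> R).
Hypotheses (eps_gt0 : 0 < eps) (a_bound : forall k, 0 < a k < 1).

Let b k := a k / Num.sqrt eps.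

Let b_gt0 k : 0 < b k.
Proof. by rewrite divr_gt0 ?sqrtr_gt0 //; case/andP: (a_bound k). Qed.

Lemma S_partial_sum_gaussian_comb (c : I -> complex.complex R) (N : nat) (x : R) :
  \sum_(n < N.+1) rc (Scoef eps n) *
     gaussian_comb b (fun k => c k * t_eigenvalue b k ^+ (2 * n + 1)) x =
  gaussian_comb b (fun k => c k * (iC R * rc (series (artanh_term (a k)) N.+1))) x.
Proof.
rewrite /gaussian_comb; under eq_bigr do rewrite mulr_sumr.
rewrite exchange_big; apply: eq_bigr => k _.
rewrite /series /= big_mkord rc_sum !mulr_sumr mulr_suml; apply: eq_bigr => n _.
by rewrite -(@Scoef_mul_eigenvalue R eps (a k) n eps_gt0); ring.
Qed.

Lemma S_partial_sum_gaussian_comb_cvg (c : I -> complex.complex R) :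
  (fun N => L2dist2
     (fun x => \sum_(n < N.+1) rc (Scoef eps n) *
        gaussian_comb b (fun k => c k * t_eigenvalue b k ^+ (2 * n + 1)) x)
     (gaussian_comb b (fun k => c k * (iC R * rc (limn (series (artanh_term (a k))))))))
  @ \oo --> 0%E.
Proof.
pose l k := limn (series (artanh_term (a k))).
pose w k N := c k * (iC R * rc (series (artanh_term (a k)) N.+1 - l k)).
rewrite (_ : (fun N => _) = fun N => L2norm2 (fun x => \sum_k w k N * rc (gaussian (b k) x))).
  apply: L2norm2_sum_cvg0 => k; first exact: L2_gaussian.
  have rem0 : (fun N => series (artanh_term (a k)) N.+1 - l k) @ \oo --> 0.
    rewrite -(subrr (l k)); apply: cvgB; last exact: cvg_cst.
    rewrite cvg_shiftS; apply: (is_cvg_artanh_series (a := a k)).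
    by case/andP: (a_bound k) => /ltW -> ->.
  rewrite (_ : (fun N => _) = fun N => sqnorm (c k) * (series (artanh_term (a k)) N.+1 - l k) ^+ 2).
    rewrite [X in _ --> X](_ : _ = sqnorm (c k) * (0 * 0)); last by rewrite !mulr0.
    by apply: cvgM; [exact: cvg_cst | rewrite -expr2; exact: cvgM].
  by apply/funext => N; rewrite /w !sqnormM sqnorm_iC sqnorm_rc mul1r.
apply/funext => N; rewrite /L2dist2 /L2norm2; apply: eq_integral => x _.
rewrite S_partial_sum_gaussian_comb -sumrB; congr (sqnorm _)%:E.
by apply: eq_bigr => k _; rewrite /w rcB; ring.
Qed.
End S_on_gaussian_combinations.

Unset Implicit Arguments.

Theorem lemma3p2 (R : realType) (eps : R) (heps : 0 < eps <= 1)
  (m : nat) (c : 'I_m -> complex.complex R) (a : 'I_m -> R)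
  (ha : forall k, 0 < a k < 1) :
  in_dom_S eps (fun x => \sum_(k < m) c k * gauss eps (a k) x).
Proof.
have eps0 : 0 < eps by case/andP: heps.
pose b k := a k / Num.sqrt eps.
have b_gt0 k : 0 < b k by rewrite divr_gt0 ?sqrtr_gt0 //; case/andP: (ha k).
have -> : (fun x => \sum_(k < m) c k * gauss eps (a k) x) = gaussian_comb b c.
  apply/funext => x; apply: eq_bigr => k _; congr (_ * rc (expR _)).
  by rewrite /b; field; rewrite gt_eqF ?sqrtr_gt0.
split; first exact: L2even_gaussian_comb.
exists (fun n => gaussian_comb b (fun k => c k * t_eigenvalue b k ^+ (2 * n + 1))).
split; first by move=> n; exact: tpow_gaussian_comb.
eexists; split; last exact: S_partial_sum_gaussian_comb_cvg.
exact: L2_gaussian_comb.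
Qed.
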